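(* Consider the discrete second-price auction. In the model with ties, the unique equilibrium is the profile in which every player uses $\beta(v)=v$ for all $v\in X$. In the model without ties, the set of equilibria is precisely the set of strategy profiles in which every player $i$ uses a bidding function with $\beta_i(v)\in\{v,\,v+\delta\}\cap X$ for every $v\in X$ (i.e. each player bids either their valuation or their valuation plus $\delta$).
   Context: Model. There are $n\ge 2$ risk-neutral bidders competing for one indivisible object. Fix $\delta>0$ and $x\in\mathbb N$ and let $X=\{0,\delta,2\delta,\dots,x\delta\}$. Each bidder $i$ privately learns a value $v_i\in X$; values are drawn independently across bidders and every element of $X$ has strictly positive probability. Each bidder submits a bid $b_i\in X$. A (pure) strategy of bidder $i$ is a bidding function $\beta_i:X\to X$. Tie rules: in the model without ties, bidder $i$ wins iff $b_i>b_j$ for all $j\neq i$ (if the highest bid is tied, nobody wins); in the model with ties, if $m$ bidders submit the highest bid, each of them wins with probability $1/m$. In the second-price auction the winner receives the object and pays the highest bid among the other bidders; payoff is value minus payment if winning and $0$ otherwise. An equilibrium is a profile of bidding functions such that each bidder's bidding function maximises their expected payoff given the others' bidding functions (a pure-strategy Bayes–Nash equilibrium) and such that no bidder uses a weakly dominated bidding function (a bidding function is weakly dominated if some other bidding function yields at least as high expected payoff against every profile of opponents' bidding functions, and strictly higher against some). *)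

From mathcomp Require Import all_boot all_order all_algebra.
Set Implicit Arguments. Unset Strict Implicit. Unset Printing Implicit Defensive.
Import Order.TTheory GRing.Theory Num.Theory.
Local Open Scope ring_scope.

(* The grid X = {0, delta, ..., x*delta} is represented by indices 'I_x.+1:
   index k stands for the value/bid k*delta.  Bidders are 'I_n. *)

Definition strategy (x : nat) := {ffun 'I_x.+1 -> 'I_x.+1}.

Definition highest_other (n x : nat) (i : 'I_n) (b : 'I_n -> 'I_x.+1) : nat :=
  (\max_(j | j != i) (b j : nat))%N.

(* Probability that bidder i wins, given the bid profile b.
   ties = true : among the m highest bidders each wins with prob. 1/m.
   ties = false: i wins iff its bid is strictly above all others. *)
Definition win_prob (R : realFieldType) (ties : bool) (n x : nat)
    (i : 'I_n) (b : 'I_n -> 'I_x.+1) : R :=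
  let m := (\max_j (b j : nat))%N in
  if ties then
    (if (b i : nat) == m then (#|[set j | (b j : nat) == m]|%:R)^-1 else 0)
  else
    (if [forall j, (j != i) ==> ((b j : nat) < b i)%N] then 1 else 0).

(* Ex-post (expected over tie-breaking) payoff of bidder i with value index v
   in the second-price auction: the winner pays the highest other bid. *)
Definition payoff (R : realFieldType) (ties : bool) (n x : nat) (delta : R)
    (i : 'I_n) (v : 'I_x.+1) (b : 'I_n -> 'I_x.+1) : R :=
  win_prob R ties i b * (delta * ((v : nat)%:R - (highest_other i b)%:R)).

(* Interim-ex-ante expected payoff of bidder i using bidding function bi,
   when the others use the bidding functions in beta (beta i is ignored);
   values are drawn independently, p j k = Prob(v_j = k*delta). *)
Definition exp_payoff (R : realFieldType) (ties : bool) (n x : nat) (delta : R)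
    (p : 'I_n -> 'I_x.+1 -> R) (i : 'I_n) (bi : strategy x)
    (beta : 'I_n -> strategy x) : R :=
  \sum_(v : {ffun 'I_n -> 'I_x.+1})
     (\prod_j p j (v j)) *
     payoff ties delta i (v i)
       (fun j => if j == i then bi (v i) else beta j (v j)).

Definition weakly_dominated (R : realFieldType) (ties : bool) (n x : nat)
    (delta : R) (p : 'I_n -> 'I_x.+1 -> R) (i : 'I_n) (bi : strategy x) : Prop :=
  exists bi' : strategy x,
    (forall beta : 'I_n -> strategy x,
        exp_payoff ties delta p i bi beta <= exp_payoff ties delta p i bi' beta)
    /\ (exists beta : 'I_n -> strategy x,
        exp_payoff ties delta p i bi beta < exp_payoff ties delta p i bi' beta).

Definition equilibrium (R : realFieldType) (ties : bool) (n x : nat)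
    (delta : R) (p : 'I_n -> 'I_x.+1 -> R) (beta : 'I_n -> strategy x) : Prop :=
  forall i : 'I_n,
    (forall bi : strategy x,
        exp_payoff ties delta p i bi beta <= exp_payoff ties delta p i (beta i) beta)
    /\ ~ weakly_dominated ties delta p i (beta i).

From mathcomp Require Import all_boot all_order all_algebra.
From mathcomp Require Import zify.
From Stdlib Require Import FunctionalExtensionality.
Set Implicit Arguments. Unset Strict Implicit. Unset Printing Implicit Defensive.
Import Order.TTheory GRing.Theory Num.Theory.
Local Open Scope ring_scope.

(* Write h for the highest bid among the rivals of bidder i and
   g = delta * (v - h) for the gain of winning with value v.  The ex-post
   payoff of i is w * g, where the winning probability w lies in [0, 1]
   and h does not depend on i's own bid; hence no bid earns more than
   max(0, g).  A bid c is called optimal for the value v if it earns exactly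
   max(0, g) against every rival profile: with ties these are c = v only,
   without ties c = v and c = v + delta.  Every other bid loses strictly
   against a suitable profile in which all rivals bid the same amount.

   Consequently a profile is an equilibrium iff every bidder only uses
   optimal bids, which is Proposition 1 once optimal bids are spelled out. *)

Lemma ler_mul_max0 (R : realDomainType) (w g : R) :
  0 <= w <= 1 -> w * g <= Order.max 0 g.
Proof.
case/andP => w_ge0 w_le1; case: (lerP 0 g) => [g_ge0 | g_lt0].
  by rewrite ler_piMl.
exact: mulr_ge0_le0 w_ge0 (ltW g_lt0).
Qed.

Lemma ltr_sum_pointwise (R : numDomainType) (I : finType) (F G : I -> R) (a : I) :
  (forall k, F k <= G k) -> F a < G a -> \sum_k F k < \sum_k G k.
Proof.
move=> FG FGa; rewrite (bigD1 a) //= [X in _ < X](bigD1 a) //=.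
by apply: ltr_leD => //; apply: ler_sum => k _.
Qed.

Section WinningProbability.
Variables (R : realFieldType) (n x : nat).
Hypothesis n_gt1 : (1 < n)%N.
Implicit Types (i j : 'I_n) (b o : 'I_n -> 'I_x.+1).

Definition deviation i (c : 'I_x.+1) o : 'I_n -> 'I_x.+1 :=
  fun j => if j == i then c else o j.

Lemma deviation_self i c o : deviation i c o i = c.
Proof. by rewrite /deviation eqxx. Qed.

Lemma exists_rival i : exists j, j != i.
Proof.
have n_gt0 : (0 < n)%N by apply: ltnW.
case: (boolP (val i == 0%N)) => [i0 | i_neq0].
  by exists (Ordinal n_gt1); apply: contraTneq i0 => <-.
by exists (Ordinal n_gt0); apply: contraNneq i_neq0 => <-.
Qed.

Lemma leq_highest_other i b j : j != i -> (b j <= highest_other i b)%N.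
Proof. exact: (@leq_bigmax_cond _ (fun k => k != i) (fun k => b k : nat)). Qed.

Lemma highest_other_deviation i c o :
  highest_other i (deviation i c o) = highest_other i o.
Proof. by apply: eq_bigr => j /negbTE; rewrite /deviation => ->. Qed.

Lemma highest_other_const i c (k : 'I_x.+1) :
  highest_other i (deviation i c (fun=> k)) = k.
Proof.
rewrite highest_other_deviation; have [j ji] := exists_rival i.
apply/eqP; rewrite eqn_leq (leq_highest_other (fun=> k) ji) andbT.
exact/bigmax_leqP.
Qed.

Lemma max_bid i b : (\max_j (b j : nat))%N = maxn (b i) (highest_other i b).
Proof. by rewrite (bigD1 i). Qed.

Lemma rivals_below i b (c : nat) :
  [forall j, (j != i) ==> (b j < c)%N] = (highest_other i b < c)%N.
Proof.
apply/forallP/idP => [below | hc j]; last first.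
  by apply/implyP => ji; apply: leq_ltn_trans hc; exact: leq_highest_other.
have [j ji] := exists_rival i; have := below j; rewrite ji /=.
case: c below => // c below _; rewrite ltnS; apply/bigmax_leqP => k ki.
by have := below k; rewrite ki.
Qed.

Lemma win_prob_no_ties i b :
  win_prob R false i b = if (highest_other i b < b i)%N then 1 else 0.
Proof. by rewrite /win_prob rivals_below. Qed.

Lemma win_prob_ties_lose i b :
  (b i < highest_other i b)%N -> win_prob R true i b = 0.
Proof.
by move=> lt; rewrite /win_prob (max_bid i) (maxn_idPr (ltnW lt)) ltn_eqF.
Qed.

Lemma win_prob_ties_sole i b :
  (highest_other i b < b i)%N -> win_prob R true i b = 1.
Proof.
move=> lt; rewrite /win_prob (max_bid i) (maxn_idPl (ltnW lt)) eqxx.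
suff -> : [set j | (b j : nat) == b i] = [set i] by rewrite cards1 invr1.
apply/setP => j; rewrite !inE; have [-> | ji] := eqVneq j i; first exact: eqxx.
by rewrite ltn_eqF // (leq_ltn_trans (leq_highest_other b ji)).
Qed.

Lemma win_prob_ties_all i (c : 'I_x.+1) :
  win_prob R true i (deviation i c (fun=> c)) = n%:R^-1.
Proof.
have all_c j : deviation i c (fun=> c) j = c by rewrite /deviation if_same.
rewrite /win_prob (max_bid i) highest_other_const all_c maxnn eqxx.
suff -> : [set j | (deviation i c (fun=> c) j : nat) == c] = [set: 'I_n].
  by rewrite cardsT card_ord.
by apply/setP => j; rewrite !inE all_c eqxx.
Qed.

Lemma win_prob_range ties i b : 0 <= win_prob R ties i b <= 1.
Proof.
rewrite /win_prob; case: ties; last by case: ifP; rewrite ?lexx ?ler01.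
case: ifP => [/eqP max_i | _]; last by rewrite lexx ler01.
have card_ge1 : (1 <= #|[set j | (b j : nat) == \max_k (b k : nat)%N]|)%N.
  by apply/card_gt0P; exists i; rewrite inE max_i.
have one_le : (1 : R) <= #|[set j | (b j : nat) == \max_k (b k : nat)%N]|%:R.
  by rewrite ler1n.
by rewrite invr_ge0 (le_trans ler01 one_le) invf_le1 // (lt_le_trans ltr01).
Qed.

End WinningProbability.

Section ExPostPayoff.
Variables (R : realFieldType) (n x : nat) (delta : R).
Hypotheses (n_gt1 : (1 < n)%N) (delta_gt0 : 0 < delta).
Implicit Types (i : 'I_n) (v c : 'I_x.+1) (b o : 'I_n -> 'I_x.+1).

Definition gain i v b : R := delta * ((v : nat)%:R - (highest_other i b)%:R).

Definition best_payoff i v b : R := Order.max 0 (gain i v b).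

Lemma payoffE ties i v b : payoff ties delta i v b = win_prob R ties i b * gain i v b.
Proof. by []. Qed.

Lemma gain_gt0 i v b : (0 < gain i v b) = (highest_other i b < v)%N.
Proof. by rewrite pmulr_rgt0 // subr_gt0 ltr_nat. Qed.

Lemma gain_lt0 i v b : (gain i v b < 0) = (v < highest_other i b)%N.
Proof. by rewrite pmulr_rlt0 // subr_lt0 ltr_nat. Qed.

Lemma payoff_le_best ties i v b : payoff ties delta i v b <= best_payoff i v b.
Proof. by rewrite payoffE ler_mul_max0 // win_prob_range. Qed.

(* The bids earning best_payoff against every rival profile. *)
Definition optimal_bid (ties : bool) (c v : 'I_x.+1) : bool :=
  if ties then c == v else ((c : nat) == v) || ((c : nat) == (v : nat).+1).

Lemma optimal_bid_refl ties v : optimal_bid ties v v.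
Proof. by case: ties; rewrite /optimal_bid eqxx. Qed.

Lemma payoff_optimal ties i v b :
  optimal_bid ties (b i) v -> payoff ties delta i v b = best_payoff i v b.
Proof.
rewrite payoffE /best_payoff /optimal_bid => opt_bi.
case: (ltngtP (highest_other i b) v) => [h_lt_v | v_lt_h | h_eq_v].
- (* outbidding all rivals: win for sure, gain positive *)
  have win : win_prob R ties i b = 1.
    case: ties opt_bi => [/eqP bi_v | opt_bi].
      by apply: win_prob_ties_sole; rewrite bi_v.
    rewrite win_prob_no_ties //.
    by case/orP: opt_bi => /eqP ->; rewrite ?h_lt_v ?(ltn_trans h_lt_v).
  by rewrite win mul1r max_r // ltW // gain_gt0.
- (* outbid by a rival: lose for sure, gain negative *)
  have lose : win_prob R ties i b = 0.
    case: ties opt_bi => [/eqP bi_v | opt_bi].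
      by apply: win_prob_ties_lose; rewrite bi_v.
    rewrite win_prob_no_ties // ifN // -leqNgt.
    by case/orP: opt_bi => /eqP ->; [exact: ltnW | exact: v_lt_h].
  by rewrite lose mul0r max_l // ltW // gain_lt0.
- by rewrite /gain h_eq_v subrr !mulr0 maxxx.
Qed.

(* A non-optimal bid is strictly worse than optimal against rivals all
   bidding the same amount: c itself, or v + delta when c exceeds it. *)
Lemma payoff_suboptimal ties i c v : ~~ optimal_bid ties c v ->
  exists o, payoff ties delta i v (deviation i c o) < best_payoff i v (deviation i c o).
Proof.
case: ties => /= [c_neq_v | ].
  exists (fun=> c); rewrite payoffE /best_payoff win_prob_ties_all //.
  set w : R := n%:R^-1; set g := gain _ _ _.
  have n_gt0 : (0 < n)%N by apply: ltnW.
  have w_gt0 : 0 < w by rewrite invr_gt0 ltr0n.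
  have w_lt1 : w < 1 by rewrite invf_lt1 ?ltr0n ?ltr1n.
  case: (ltngtP c v) => [c_lt_v | v_lt_c | c_eq_v].
  - have g_gt0 : 0 < g by rewrite gain_gt0 highest_other_const.
    by rewrite max_r ?ltW // gtr_pMl.
  - have g_lt0 : g < 0 by rewrite gain_lt0 highest_other_const.
    by rewrite max_l ?ltW // pmulr_rlt0.
  - by move: c_neq_v; rewrite (val_inj c_eq_v) eqxx.
rewrite negb_or => /andP [c_neq_v c_neq_v1]; case: (ltnP c v) => [c_lt_v | v_le_c].
  exists (fun=> c); rewrite payoffE /best_payoff win_prob_no_ties //.
  have g_gt0 : 0 < gain i v (deviation i c (fun=> c)).
    by rewrite gain_gt0 highest_other_const.
  by rewrite highest_other_const // deviation_self ltnn mul0r max_r ?ltW.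
have v1_lt_c : ((v : nat).+1 < c)%N by lia.
have v1_ord : ((v : nat).+1 < x.+1)%N by apply: ltn_trans v1_lt_c _.
exists (fun=> inord (v : nat).+1); rewrite payoffE /best_payoff.
have h_v1 : highest_other i (deviation i c (fun=> inord (v : nat).+1)) = (v : nat).+1.
  by rewrite highest_other_const // inordK.
rewrite win_prob_no_ties // h_v1 deviation_self v1_lt_c mul1r.
rewrite lt_max; apply/orP; left.
by rewrite /gain h_v1 mulrSr opprD addrA subrr add0r mulrN1 oppr_lt0.
Qed.

Lemma payoff_truthful ties i v c o :
  payoff ties delta i v (deviation i v o) = best_payoff i v (deviation i c o).
Proof.
rewrite payoff_optimal ?deviation_self ?optimal_bid_refl //.
by rewrite /best_payoff /gain !highest_other_deviation.
Qed.

Lemma payoff_le_truthful ties i v c o :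
  payoff ties delta i v (deviation i c o) <= payoff ties delta i v (deviation i v o).
Proof. by rewrite (payoff_truthful _ _ _ c) payoff_le_best. Qed.

Lemma payoff_optimal_truthful ties i v c o : optimal_bid ties c v ->
  payoff ties delta i v (deviation i c o) = payoff ties delta i v (deviation i v o).
Proof.
by move=> opt_c; rewrite (payoff_truthful _ _ _ c) payoff_optimal ?deviation_self.
Qed.

End ExPostPayoff.

Section ExpectedPayoff.
Variables (R : realFieldType) (n x : nat) (delta : R) (p : 'I_n -> 'I_x.+1 -> R).
Hypotheses (n_gt1 : (1 < n)%N) (delta_gt0 : 0 < delta).
Hypothesis p_gt0 : forall i k, 0 < p i k.
Implicit Types (i : 'I_n) (bi : strategy x) (beta : 'I_n -> strategy x).

Definition truthful : strategy x := [ffun v => v].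

Lemma prob_gt0 (v : {ffun 'I_n -> 'I_x.+1}) : 0 < \prod_j p j (v j).
Proof. by apply: prodr_gt0 => j _. Qed.

Lemma exp_payoffE ties i bi beta : exp_payoff ties delta p i bi beta =
  \sum_(v : {ffun 'I_n -> 'I_x.+1}) (\prod_j p j (v j)) *
     payoff ties delta i (v i) (deviation i (bi (v i)) (fun j => beta j (v j))).
Proof. by []. Qed.

Lemma exp_payoff_le_truthful ties i bi beta :
  exp_payoff ties delta p i bi beta <= exp_payoff ties delta p i truthful beta.
Proof.
rewrite !exp_payoffE; apply: ler_sum => v _.
by rewrite ffunE ler_wpM2l ?(ltW (prob_gt0 v)) ?payoff_le_truthful.
Qed.

Lemma exp_payoff_optimal ties i bi beta : (forall k, optimal_bid ties (bi k) k) ->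
  exp_payoff ties delta p i bi beta = exp_payoff ties delta p i truthful beta.
Proof.
move=> opt_bi; rewrite !exp_payoffE; apply: eq_bigr => v _.
by rewrite ffunE payoff_optimal_truthful.
Qed.

(* A strategy using a non-optimal bid at value k loses strictly against
   rivals who always bid as in payoff_suboptimal: the loss occurs when all
   values equal k, an event of positive probability. *)
Lemma exp_payoff_suboptimal ties i bi k : ~~ optimal_bid ties (bi k) k ->
  exists beta, exp_payoff ties delta p i bi beta < exp_payoff ties delta p i truthful beta.
Proof.
move=> subopt; have [o lt_o] := payoff_suboptimal n_gt1 delta_gt0 i subopt.
exists (fun j => [ffun=> o j]); rewrite !exp_payoffE.
apply: (ltr_sum_pointwise (a := [ffun=> k])) => [v | ].
  by rewrite ffunE ler_wpM2l ?(ltW (prob_gt0 v)) ?payoff_le_truthful.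
have rivals : (fun j => [ffun=> o j] ([ffun=> k] j)) = o.
  by apply: functional_extensionality => j; rewrite ffunE.
rewrite rivals !ffunE ltr_pM2l ?prob_gt0 //.
by rewrite (payoff_truthful n_gt1 delta_gt0 _ _ _ (bi k)).
Qed.

(* Equilibria are exactly the profiles using optimal bids only: a non-optimal
   strategy is weakly dominated by truthful bidding, while an optimal one
   earns the truthful, maximal, payoff against every profile. *)
Lemma equilibrium_iff_optimal ties beta :
  equilibrium ties delta p beta <-> forall i k, optimal_bid ties (beta i k) k.
Proof.
split=> [eq_beta i k | opt_beta i].
  apply/negPn/negP => subopt; have [_ undominated] := eq_beta i.
  apply: undominated; exists truthful; split; first exact: exp_payoff_le_truthful.
  exact: exp_payoff_suboptimal subopt.
have as_truthful beta' := @exp_payoff_optimal ties i (beta i) beta' (opt_beta i).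
split=> [bi | [bi' [_ [beta' lt_beta']]]].
  by rewrite as_truthful exp_payoff_le_truthful.
by move: lt_beta'; rewrite as_truthful ltNge exp_payoff_le_truthful.
Qed.

End ExpectedPayoff.

Theorem proposition1 (R : realFieldType) (n x : nat) (delta : R)
    (p : 'I_n -> 'I_x.+1 -> R) :
  (2 <= n)%N -> 0 < delta ->
  (forall i k, 0 < p i k) -> (forall i, \sum_k p i k = 1) ->
  (forall beta : 'I_n -> strategy x,
     equilibrium true delta p beta <-> (forall i v, beta i v = v))
  /\
  (forall beta : 'I_n -> strategy x,
     equilibrium false delta p beta <->
     (forall i v, (beta i v : nat) = v \/ (beta i v : nat) = (v : nat).+1)).
Proof.
(* Only positivity of the value distributions matters, not their normalisation. *)
move=> n_gt1 delta_gt0 p_gt0 _; split=> beta; rewrite equilibrium_iff_optimal //.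
  by split=> opt i v; [apply/eqP; exact: opt | rewrite /optimal_bid opt].
split=> opt i v; first by case/orP: (opt i v) => /eqP ->; [left | right].
by rewrite /optimal_bid; case: (opt i v) => ->; rewrite eqxx ?orbT.
Qed.
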